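(* Consider the compound decision framework described in the context, with first selection rule $\mathbf s^1:\mathcal X\to\{0,1\}^m$, decision strategy $\tilde{\mathbf d}:\{0,1\}^m\times\mathcal X\to\mathcal D$ and selection strategy $\tilde{\mathbf s}:\mathcal D\times\mathcal X\to\{0,1\}^m$. Suppose (i) the composite selection is contracting: for every $\mathbf S\in\{0,1\}^m$, $\tilde{\mathbf s}(\tilde{\mathbf d}(\mathbf S,\mathbf X),\mathbf X)\preceq\mathbf S$ with probability 1; (ii) for all $t\ge1$ and all $\theta\in\Theta$, $r(\mathbf d^t,\mathbf s^t,\theta)\le q$. Then the decision rule $\mathbf d^T$ produced by the iteration controls the extra-selection risk at level $q$: for all $\theta\in\Theta$, $$r(\mathbf d^T,\mathbf s^{T+1},\theta)=\mathbb E_\theta\left[\frac{\sum_{i\in\mathcal S^{T+1}}\ell_i(D_i^T,\theta)}{1\vee|\mathcal S^{T+1}|}\right]\le q.$$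
   Context: Data $\mathbf X$ takes values in a space $\mathcal X$ with distribution $P_\theta$, $\theta\in\Theta$; $\mathbb E_\theta$ is expectation under $P_\theta$. There are $m$ tasks; task $i$ has a decision space $\mathcal D_i$ and loss $\ell_i:\mathcal D_i\times\Theta\to[0,1]$; $\mathcal D=\mathcal D_1\times\dots\times\mathcal D_m$. For a decision rule $\mathbf d:\mathcal X\to\mathcal D$ and selection rule $\mathbf s:\mathcal X\to\{0,1\}^m$, the selective risk is $r(\mathbf d,\mathbf s,\theta)=\mathbb E_\theta\big[\sum_{i=1}^m s_i(\mathbf X)\ell_i(d_i(\mathbf X),\theta)/(1\vee\sum_{i=1}^m s_i(\mathbf X))\big]$. For $\mathbf S,\mathbf S'\in\{0,1\}^m$, $\mathbf S\preceq\mathbf S'$ means $S_i\le S_i'$ for all $i$; the selected set of $\mathbf S$ is $\mathcal S=\{i:S_i=1\}$ and $|\mathcal S|=\sum_iS_i$. The iteration (Algorithm 1): $\mathbf S^1=\mathbf s^1(\mathbf X)$; for $t\ge1$, $\mathbf D^t=\tilde{\mathbf d}(\mathbf S^t,\mathbf X)$ and $\mathbf S^{t+1}=\tilde{\mathbf s}(\mathbf D^t,\mathbf X)$; $T$ is the first $t$ with $\mathbf S^{t+1}=\mathbf S^t$ (a random index). Cumulative rules: $\mathbf s^t(\mathbf X)=\mathbf S^t$ i.e. $\mathbf s^t=(\tilde{\mathbf s}\circ\tilde{\mathbf d})^{t-1}\circ\mathbf s^1$ where $(\tilde{\mathbf s}\circ\tilde{\mathbf d})(\mathbf S,\mathbf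 X)=\tilde{\mathbf s}(\tilde{\mathbf d}(\mathbf S,\mathbf X),\mathbf X)$, and $\mathbf d^t(\mathbf X)=\tilde{\mathbf d}(\mathbf s^t(\mathbf X),\mathbf X)=\mathbf D^t$. The rules $\mathbf d^T$ and $\mathbf s^{T+1}$ map $\mathbf X$ to $\mathbf D^{T}$ and $\mathbf S^{T+1}$ respectively. *)

From HB Require Import structures.
From mathcomp Require Import all_boot all_order all_algebra.
From mathcomp Require Import all_classical all_reals all_analysis.
Set Implicit Arguments. Unset Strict Implicit. Unset Printing Implicit Defensive.
Import Order.TTheory GRing.Theory Num.Theory.
Local Open Scope ring_scope.

Notation sel m := {ffun 'I_m -> bool}.

Definition sel_le (m : nat) (S S' : sel m) : Prop := forall i, S i ==> S' i.

Definition sel_card (m : nat) (S : sel m) : nat := \sum_(i < m) nat_of_bool (S i).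

Definition sel_risk (dsp : measure_display) (X : measurableType dsp) (R : realType)
  (Theta : Type) (P : Theta -> probability X R) (m : nat) (D : 'I_m -> Type)
  (loss : forall i : 'I_m, D i -> Theta -> R)
  (d : X -> forall i : 'I_m, D i) (s : X -> sel m) (theta : Theta) : \bar R :=
  (\int[P theta]_x
     ((\sum_(i < m) (nat_of_bool (s x i))%:R * loss i (d x i) theta)
        / (maxn 1 (sel_card (s x)))%:R)%:E)%E.

(* Algorithm 1: S^1 = s1 X; S^{t+1} = stilde (dtilde S^t X) X.
   algS t x = S^t (for t >= 1; the value at t = 0 is irrelevant). *)
Definition algS (X : Type) (m : nat) (Dec : Type)
  (s1 : X -> sel m) (dtilde : sel m -> X -> Dec) (stilde : Dec -> X -> sel m)
  (t : nat) (x : X) : sel m :=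
  iter t.-1 (fun S => stilde (dtilde S x) x) (s1 x).

Definition algD (X : Type) (m : nat) (Dec : Type)
  (s1 : X -> sel m) (dtilde : sel m -> X -> Dec) (stilde : Dec -> X -> sel m)
  (t : nat) (x : X) : Dec :=
  dtilde (algS s1 dtilde stilde t x) x.

(* T = first t >= 1 with S^{t+1} = S^t; if no such t exists (only possible
   outside a null set under the contraction hypothesis), T := 0 by convention. *)
Definition algT (X : Type) (m : nat) (Dec : Type)
  (s1 : X -> sel m) (dtilde : sel m -> X -> Dec) (stilde : Dec -> X -> sel m)
  (x : X) : nat :=
  let P := fun t => (0 < t)%N && (algS s1 dtilde stilde t.+1 x == algS s1 dtilde stilde t x) in
  match boolp.pselect (exists t, P t) with
  | left e => ex_minn e
  | right _ => 0%N
  end.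

(** Under the contraction hypothesis the composite map S |-> s~(d~(S, X), X) only
    removes tasks, so almost surely the selected sets S^1 ⪰ S^2 ⪰ ... strictly
    decrease until they stabilise, which happens after at most m strict steps.
    Hence T <= m + 1 and, once stable, the iteration stays put: almost surely
    S^(T+1) = S^(m+2) and D^T = D^(m+2). The selective risk only depends on the
    rules up to null sets, so the risk of (d^T, s^(T+1)) is the risk of
    (d^(m+2), s^(m+2)), which is at most q by hypothesis. *)
From HB Require Import structures.
From mathcomp Require Import all_boot all_order all_algebra.
From mathcomp Require Import all_classical all_reals all_analysis measurable_realfun.
From mathcomp Require Import zify.
Set Implicit Arguments.
Unset Strict Implicit.
Unset Printing Implicit Defensive.
Import Order.TTheory GRing.Theory Num.Theory.
Local Open Scope ring_scope.

Section ContractingSelections.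
Variable m : nat.

Lemma sel_card_le (S : sel m) : (sel_card S <= m)%N.
Proof.
rewrite /sel_card -[leqRHS](card_ord m) -sum1_card.
by apply: leq_sum => i _; case: (S i).
Qed.

Lemma sel_card_lt (S S' : sel m) :
  sel_le S' S -> S' != S -> (sel_card S' < sel_card S)%N.
Proof.
move=> le_S'S neq_S'S.
have [i S'i_neq] : exists i, S' i != S i.
  apply/existsP; apply: contraR neq_S'S => /existsPn eqS'S.
  by apply/eqP/ffunP => i; apply/eqP/negPn.
have [S'i Si] : S' i = false /\ S i = true.
  by move: (le_S'S i) S'i_neq; case: (S' i); case: (S i).
rewrite /sel_card (bigD1 i) //= [ltnRHS](bigD1 i) //= S'i Si add0n add1n ltnS.
by apply: leq_sum => j _; move: (le_S'S j); case: (S' j); case: (S j).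
Qed.

Lemma contracting_iter_fixed (F : sel m -> sel m) (S0 : sel m) :
  (forall S, sel_le (F S) S) ->
  exists2 k, (k <= m)%N & iter k.+1 F S0 = iter k F S0.
Proof.
move=> contractF.
case: (pickP (fun j : 'I_m.+1 => iter j.+1 F S0 == iter j F S0)) => [k /eqP fixk|nofix].
  by exists k => //; rewrite -ltnS.
have card_drop k : (k <= m.+1)%N -> (sel_card (iter k F S0) + k <= sel_card S0)%N.
  elim: k => [|k IHk] le_km; first by rewrite addn0.
  have := sel_card_lt (contractF (iter k F S0)) (negbT (nofix (Ordinal le_km))).
  by have := IHk (ltnW le_km); rewrite iterS; lia.
by have := card_drop m.+1 (leqnn _); have := sel_card_le S0; lia.
Qed.

End ContractingSelections.

Lemma iter_fixed_from (T : Type) (F : T -> T) (a : T) (k : nat) :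
  iter k.+1 F a = iter k F a -> forall n, (k <= n)%N -> iter n F a = iter k F a.
Proof.
move=> fixk n /subnKC <-; elim: (n - k)%N => [|j IHj]; first by rewrite addn0.
by rewrite addnS iterS IHj -iterS fixk.
Qed.

Section Algorithm.
Variables (X : Type) (m : nat) (Dec : Type).
Variables (s1 : X -> sel m) (dtilde : sel m -> X -> Dec) (stilde : Dec -> X -> sel m).

Local Notation S_ := (algS s1 dtilde stilde).
Local Notation D_ := (algD s1 dtilde stilde).
Local Notation T_ := (algT s1 dtilde stilde).

Lemma algS_fixed_from (t : nat) (x : X) : (0 < t)%N ->
  S_ t.+1 x = S_ t x -> forall n, (t <= n)%N -> S_ n x = S_ t x.
Proof.
by case: t => // k _ fixk [|n] //; rewrite ltnS; exact: iter_fixed_from.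
Qed.

Lemma algT_spec (x : X) : (forall S, sel_le (stilde (dtilde S x) x) S) ->
  [/\ (0 < T_ x)%N, (T_ x <= m.+1)%N & S_ (T_ x).+1 x = S_ (T_ x) x].
Proof.
move=> contract_x.
have [k le_km fixk] := contracting_iter_fixed (s1 x) contract_x.
have fixk1 : (0 < k.+1)%N && (S_ k.+2 x == S_ k.+1 x) by apply/eqP.
rewrite /algT; case: boolp.pselect => [ex_fix|]; last by case; exists k.+1.
case: ex_minnP => T /andP[T_gt0 /eqP fixT] T_min.
by split=> //; apply: leq_trans (T_min _ fixk1) _.
Qed.

Lemma alg_final_state (x : X) : (forall S, sel_le (stilde (dtilde S x) x) S) ->
  D_ (T_ x) x = D_ m.+2 x /\ S_ (T_ x).+1 x = S_ m.+2 x.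
Proof.
move=> /algT_spec[T_gt0 le_Tm fixT].
have stable := algS_fixed_from T_gt0 fixT.
by rewrite /algD fixT stable // ltnW.
Qed.

End Algorithm.

Section NonmeasurableIntegral.
Local Open Scope ereal_scope.
Import HBNNSimple.
Context d (T : measurableType d) (R : realType) (mu : {measure set T -> \bar R}).

(* No measurability is assumed: for nonnegative functions the integral is the
   supremum of the integrals of the simple functions below them. *)
Lemma ge0_le_integral_nomeas (f g : T -> \bar R) : (forall x, 0 <= f x) ->
  (forall x, f x <= g x) -> \int[mu]_x f x <= \int[mu]_x g x.
Proof.
move=> f0 le_fg; rewrite !ge0_integralTE // => [|x]; last exact: le_trans (le_fg x).
apply: ereal_sup_le => _ [h le_hf <-]; exists h => //= x; exact: le_trans (le_hf x) _.
Qed.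

Lemma ae_ge0_le_integral_nomeas (f g : T -> \bar R) :
  (forall x, 0 <= f x) -> (forall x, 0 <= g x) ->
  {ae mu, forall x, f x <= g x} -> \int[mu]_x f x <= \int[mu]_x g x.
Proof.
move=> f0 g0 [N [mN muN0 le_fg_offN]].
rewrite ge0_integralTE //; apply: ge_ereal_sup => _ [h le_hf <-].
rewrite -integralT_nnsfun (ge0_negligible_integral _ _ _ _ muN0) //; last 2 first.
- by apply/measurable_EFinP; exact: (measurable_funP h).
- by move=> x _; rewrite lee_fin.
rewrite integral_mkcond; apply: ge0_le_integral_nomeas => x; rewrite patchE.
  by case: ifP => // _; rewrite lee_fin.
case: ifPn => // /set_mem [_ xNN]; apply: le_trans (le_hf x) _.
by apply: contrapT => not_le_fg; apply: xNN; exact: le_fg_offN.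
Qed.

End NonmeasurableIntegral.

Lemma sel_risk_ae_eq (dsp : measure_display) (X : measurableType dsp) (R : realType)
    (Theta : Type) (P : Theta -> probability X R) (m : nat) (D : 'I_m -> Type)
    (loss : forall i : 'I_m, D i -> Theta -> R)
    (loss_ge0 : forall i a theta, 0 <= loss i a theta)
    (d d' : X -> forall i : 'I_m, D i) (s s' : X -> sel m) (theta : Theta) :
  {ae P theta, forall x, d x = d' x /\ s x = s' x} ->
  sel_risk P loss d s theta = sel_risk P loss d' s' theta.
Proof.
have risk_ge0 (d0 : X -> forall i, D i) (s0 : X -> sel m) x :
    (0 <= ((\sum_(i < m) (nat_of_bool (s0 x i))%:R * loss i (d0 x i) theta)
           / (maxn 1 (sel_card (s0 x)))%:R)%:E)%E.
  by rewrite lee_fin divr_ge0 // sumr_ge0 // => i _; rewrite mulr_ge0.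
move=> ae_eq; apply/eqP; rewrite eq_le.
by apply/andP; split; apply: ae_ge0_le_integral_nomeas => //;
  apply: filterS ae_eq => x [-> ->].
Qed.

Theorem theorem1 (dsp : measure_display) (X : measurableType dsp) (R : realType)
  (Theta : Type) (P : Theta -> probability X R) (m : nat) (D : 'I_m -> Type)
  (loss : forall i : 'I_m, D i -> Theta -> R)
  (loss_range : forall (i : 'I_m) (a : D i) (theta : Theta),
      0 <= loss i a theta <= 1)
  (s1 : X -> sel m)
  (dtilde : sel m -> X -> forall i : 'I_m, D i)
  (stilde : (forall i : 'I_m, D i) -> X -> sel m)
  (q : R)
  (contracting : forall (theta : Theta) (S : sel m),
      {ae P theta, forall x, sel_le (stilde (dtilde S x) x) S})
  (risk_t : forall (t : nat) (theta : Theta), (1 <= t)%N ->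
      (sel_risk P loss (algD s1 dtilde stilde t) (algS s1 dtilde stilde t) theta
         <= q%:E)%E) :
  forall theta : Theta,
    (sel_risk P loss
       (fun x => algD s1 dtilde stilde (algT s1 dtilde stilde x) x)
       (fun x => algS s1 dtilde stilde (algT s1 dtilde stilde x).+1 x) theta
     <= q%:E)%E.
Proof.
move=> theta.
have loss_ge0 i a th : 0 <= loss i a th by case/andP: (loss_range i a th).
have ae_contract : {ae P theta, forall x S, sel_le (stilde (dtilde S x) x) S}.
  by apply: filter_forall => S; exact: contracting.
have ae_final : {ae P theta, forall x,
    algD s1 dtilde stilde (algT s1 dtilde stilde x) x = algD s1 dtilde stilde m.+2 x /\
    algS s1 dtilde stilde (algT s1 dtilde stilde x).+1 x = algS s1 dtilde stilde m.+2 x}.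
  by apply: filterS ae_contract => x; exact: alg_final_state.
by rewrite (sel_risk_ae_eq loss_ge0 ae_final); exact: risk_t.
Qed.
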